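(* Let $n\ge5$. For $1\le r\le n-1$ let $N(n,r)$ be the number of triples $(\alpha,\beta,\gamma)\in(\mathbb{Z}_2^n)^3$ with $\mathrm{adp}^{\mathrm{XR}}_r(\alpha,\beta\to\gamma)=0$. Then $N(n,r)<N(n,1)$ for every $r$ with $2\le r\le n-1$.
   Context: For $x\in\mathbb{Z}_2^n$, $x=(x_0,\dots,x_{n-1})$ is identified with the integer $\sum_i x_i2^{n-1-i}$; $+$ is addition modulo $2^n$, $\oplus$ is bitwise XOR, $x\lll r=(x_r,\dots,x_{n-1},x_0,\dots,x_{r-1})$. $\mathrm{adp}^{\mathrm{XR}}_r(\alpha,\beta\to\gamma)=4^{-n}\#\{(x,y)\in(\mathbb{Z}_2^n)^2: ((x+\alpha)\oplus(y+\beta))\lll r=((x\oplus y)\lll r)+\gamma\}$. *)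

From mathcomp Require Import all_boot all_order all_algebra.
Set Implicit Arguments. Unset Strict Implicit. Unset Printing Implicit Defensive.

Definition bv (n : nat) := {ffun 'I_n -> bool}.

Definition bv_val n (x : bv n) : nat := \sum_(i < n) (x i : nat) * 2 ^ (n.-1 - i).

Definition bv_of_nat n (k : nat) : bv n := [ffun i : 'I_n => odd (k %/ 2 ^ (n.-1 - i))].

Definition bv_add n (x y : bv n) : bv n := bv_of_nat n (bv_val x + bv_val y).

Definition bv_xor n (x y : bv n) : bv n := [ffun i => x i (+) y i].

Definition rot_idx n (i : 'I_n) (r : nat) : 'I_n :=
  match n return 'I_n -> 'I_n with
  | 0 => fun i => i
  | m.+1 => fun i => inord ((i + r) %% m.+1)
  end i.

(* left rotation: (x <<< r) = (x_r, ..., x_{n-1}, x_0, ..., x_{r-1}),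
   i.e. (x <<< r)_i = x_{(i + r) mod n} *)
Definition bv_rotl n (x : bv n) (r : nat) : bv n := [ffun i : 'I_n => x (rot_idx i r)].

Definition adp_count n (r : nat) (a b g : bv n) : nat :=
  #|[set p : bv n * bv n |
     bv_rotl (bv_xor (bv_add p.1 a) (bv_add p.2 b)) r
       == bv_add (bv_rotl (bv_xor p.1 p.2) r) g]|.

Definition adpXR n (r : nat) (a b g : bv n) : rat :=
  ((adp_count r a b g)%:R / (4 ^ n)%:R)%R.

Definition Nzero (n r : nat) : nat :=
  #|[set t : bv n * bv n * bv n | adpXR r t.1.1 t.1.2 t.2 == 0%R]|.

From mathcomp Require Import all_boot all_order all_algebra.
From mathcomp Require Import ring zify.
Set Implicit Arguments. Unset Strict Implicit. Unset Printing Implicit Defensive.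
Import Order.TTheory GRing.Theory Num.Theory.

(* Write z = (x (+) y) <<< r.  Bit by bit, the equation only involves the carries of
   x + a, y + b and z + g, so it is decided by a nondeterministic automaton whose states
   are these three carries: it reads a_j, b_j, g_(j+r) at step j and guesses x_j and
   z_(j+r).  Since z is rotated, its carry chain starts at bit r; the automaton guesses
   that carry, restarts the z-carry at 0 when z wraps around after n - r letters, and
   checks the guess after the last letter.  Hence N(n, r) counts the words of length n
   rejected by the automaton, and through the subset construction this count satisfies
   linear recurrences over the finitely many reachable pairs of state sets.  A computed
   certificate diagonalizes them: 4410 N(n, r) is an explicit combination of 8^(n-r),
   4^(n-r), 3^(n-r) times 8^r, 4^r, 1, and comparing it with its value at r = 1 gives
   the inequality. *)

(** * Bits of sums and rotations *)

Definition bitn (k j : nat) : bool := odd (k %/ 2 ^ j).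

Lemma sum_pow2_lt (b : nat -> bool) N : \sum_(j < N) b j * 2 ^ j < 2 ^ N.
Proof.
elim: N => [|N IH]; first by rewrite big_ord0.
rewrite big_ord_recr /= expnS mul2n -addnn addnC -addnS.
by apply: leq_add IH; case: (b N); rewrite ?mul1n ?mul0n.
Qed.

Lemma bitn_sum_pow2 (b : nat -> bool) N k :
  k < N -> bitn (\sum_(j < N) b j * 2 ^ j) k = b k.
Proof.
elim: N => [//|N IH] hk; rewrite big_ord_recr /= /bitn addnC.
have [hkN|->] : k < N \/ k = N by lia.
  have -> : 2 ^ N = 2 ^ (N - k) * 2 ^ k by rewrite -expnD subnK // ltnW.
  rewrite mulnA divnMDl ?expn_gt0 // oddD oddM oddX subn_eq0 leqNgt hkN andbF.
  exact: IH.
by rewrite divnMDl ?expn_gt0 // divn_small ?sum_pow2_lt // addn0; case: (b N).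
Qed.

Definition maj (p q s : bool) : bool := (p && q) || (p && s) || (q && s).

Fixpoint carry (p q : nat -> bool) (c : bool) (j : nat) : bool :=
  if j is j'.+1 then maj (p j') (q j') (carry p q c j') else c.

Lemma eq_carry p q p' q' c j :
  (forall i, i < j -> p i = p' i /\ q i = q' i) -> carry p q c j = carry p' q' c j.
Proof.
elim: j => [//|j IH] e /=; have [-> ->] := e j (ltnSn j).
by rewrite IH // => i hi; apply: e; apply: ltnW.
Qed.

Lemma carryD p q c i j :
  carry p q c (i + j) = carry (fun t => p (i + t)) (fun t => q (i + t)) (carry p q c i) j.
Proof. by elim: j => [|j IH]; rewrite ?addn0 // addnS /= IH. Qed.

Lemma divnD_pow2 p q j :
  (p + q) %/ 2 ^ j = p %/ 2 ^ j + q %/ 2 ^ j + carry (bitn p) (bitn q) false j.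
Proof.
elim: j => [|j IH]; first by rewrite !expn0 !divn1 addn0.
rewrite expnSr !divnMA IH /= /bitn.
set P := p %/ 2 ^ j; set Q := q %/ 2 ^ j; set c := carry _ _ _ j.
rewrite {1}(divn_eq P 2) {1}(divn_eq Q 2) !modn2.
have -> : P %/ 2 * 2 + odd P + (Q %/ 2 * 2 + odd Q) + c
          = (P %/ 2 + Q %/ 2) * 2 + (odd P + odd Q + c) by lia.
by rewrite divnMDl //; congr (_ + _); case: (odd P); case: (odd Q); case: c.
Qed.

Lemma bitnD p q j :
  bitn (p + q) j = bitn p j (+) bitn q j (+) carry (bitn p) (bitn q) false j.
Proof. by rewrite {1}/bitn divnD_pow2 !oddD oddb. Qed.

Section BitVectors.
Variable n : nat.
Implicit Types (x y : bv n) (i : 'I_n).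

(* [vbit x j] is the bit of weight 2^j, i.e. [x_(n-1-j)] in the indexing of [bv]. *)
Definition vbit x (j : nat) : bool := bitn (bv_val x) j.

Lemma vbit_rev x i : vbit x (rev_ord i) = x i.
Proof.
pose b (j : nat) := oapp (fun k : 'I_n => x (rev_ord k)) false (insub j).
rewrite /vbit; have -> : bv_val x = \sum_(j < n) b j * 2 ^ j.
  rewrite /bv_val (reindex_inj rev_ord_inj); apply: eq_bigr => j _ /=.
  by rewrite /b valK; congr (_ * 2 ^ _); case: j => j hj /=; lia.
rewrite bitn_sum_pow2 ?ltn_ord // /b insubT ?ltn_ord // => h.
by congr (x _); apply: val_inj; rewrite /= subnSK ?subKn ?ltn_ord // ltnW.
Qed.

Lemma vbitE x (j : 'I_n) : vbit x j = x (rev_ord j).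
Proof. by rewrite -{1}(rev_ordK j) vbit_rev. Qed.

Lemma vbit_inj x y : (forall j, j < n -> vbit x j = vbit y j) -> x = y.
Proof. by move=> e; apply/ffunP => i; rewrite -!vbit_rev e. Qed.

Definition bv_of_bits (f : nat -> bool) : bv n := [ffun i => f (rev_ord i)].

Lemma vbit_of_bits f j : j < n -> vbit (bv_of_bits f) j = f j.
Proof. by move=> hj; rewrite (vbitE _ (Ordinal hj)) ffunE rev_ordK. Qed.

Lemma vbit_of_nat k j : j < n -> vbit (bv_of_nat n k) j = bitn k j.
Proof.
by move=> hj; rewrite (vbitE _ (Ordinal hj)) ffunE /bitn /=; congr (odd (_ %/ 2 ^ _)); lia.
Qed.

Lemma vbit_add x y j : j < n ->
  vbit (bv_add x y) j = vbit x j (+) vbit y j (+) carry (vbit x) (vbit y) false j.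
Proof. by move=> hj; rewrite vbit_of_nat // bitnD. Qed.

Lemma vbit_xor x y j : j < n -> vbit (bv_xor x y) j = vbit x j (+) vbit y j.
Proof. by move=> hj; rewrite !(vbitE _ (Ordinal hj)) ffunE. Qed.

End BitVectors.

Definition rot_src (n r k : nat) : nat := (k + (n - r)) %% n.

Lemma modn_subn a N : N <= a < N + N -> a %% N = a - N.
Proof. by case/andP=> h1 h2; rewrite -{1}(subnK h1) modnDr modn_small // ltn_subLR. Qed.

Lemma vbit_rotl n (x : bv n.+1) r k : r <= n.+1 -> k < n.+1 ->
  vbit (bv_rotl x r) k = vbit x (rot_src n.+1 r k).
Proof.
move=> hr hk; rewrite (vbitE _ (Ordinal hk)) ffunE /rot_idx -vbit_rev.
congr (vbit x _); rewrite /= inordK ?ltn_mod // /rot_src.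
have [h|h] : r <= k \/ k < r by lia.
  rewrite (@modn_small (n - k + r)); last by lia.
  rewrite modn_subn; lia.
rewrite modn_subn; last by lia.
rewrite modn_small; lia.
Qed.

Definition xr_holds n r (a b g x y : bv n) : bool :=
  bv_rotl (bv_xor (bv_add x a) (bv_add y b)) r == bv_add (bv_rotl (bv_xor x y) r) g.

Definition zcarry n r (x y g : bv n) : nat -> bool :=
  carry (vbit (bv_rotl (bv_xor x y) r)) (vbit g) false.

(* Bit [k] of the equation, after cancelling [x_s (+) y_s] on both sides, where
   [s = rot_src n r k] is the position of [x], [y] that bit [k] of the rotation reads. *)
Definition xr_bitwise n r (a b g x y : bv n) : Prop :=
  forall k, k < n -> let s := rot_src n r k in
    vbit a s (+) vbit b s (+) carry (vbit x) (vbit a) false s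
      (+) carry (vbit y) (vbit b) false s = vbit g k (+) zcarry r x y g k.

Lemma vbit_rotl_xor n (x y : bv n.+1) r k : r <= n.+1 -> k < n.+1 ->
  vbit (bv_rotl (bv_xor x y) r) k = vbit x (rot_src n.+1 r k) (+) vbit y (rot_src n.+1 r k).
Proof. by move=> hr hk; rewrite vbit_rotl // vbit_xor // ltn_mod. Qed.

Lemma xorb_cancel (p q a b c d g k : bool) :
  (p (+) a (+) c (+) (q (+) b (+) d) == p (+) q (+) g (+) k) = (a (+) b (+) c (+) d == g (+) k).
Proof. by case: p q a b c d g k => [] [] [] [] [] [] [] []. Qed.

Lemma xr_holdsP n r (a b g x y : bv n.+1) : r <= n.+1 ->
  xr_holds r a b g x y <-> xr_bitwise r a b g x y.
Proof.
move=> hr; pose s k := rot_src n.+1 r k.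
have hs k : s k < n.+1 by rewrite ltn_mod.
have bitE k : k < n.+1 ->
    (vbit (bv_rotl (bv_xor (bv_add x a) (bv_add y b)) r) k ==
     vbit (bv_add (bv_rotl (bv_xor x y) r) g) k) =
    (vbit a (s k) (+) vbit b (s k) (+) carry (vbit x) (vbit a) false (s k)
       (+) carry (vbit y) (vbit b) false (s k) == vbit g k (+) zcarry r x y g k).
  move=> hk; rewrite vbit_rotl // vbit_xor // !vbit_add // vbit_rotl_xor //.
  by rewrite xorb_cancel.
split=> [/eqP e k hk | h]; first by apply/eqP; rewrite -bitE // e.
by apply/eqP/vbit_inj => k hk; apply/eqP; rewrite bitE //; apply/eqP/h.
Qed.

(** * A carry automaton *)

(* Letters are triples (a_j, b_j, g_(j+r mod n)), states are the carries of x + a, y + b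
   and z + g, and [step s l x z] is the transition that guesses x_j = x and z_(j+r) = z. *)
Definition bit3 := (bool * bool * bool)%type.

Definition all_bit3 : seq bit3 :=
  [:: (false, false, false); (false, false, true); (false, true, false); (false, true, true);
      (true, false, false); (true, false, true); (true, true, false); (true, true, true)].

Lemma mem_all_bit3 (l : bit3) : l \in all_bit3.
Proof. by case: l => [[[] []] []]. Qed.

Definition step_ok (s l : bit3) : bool :=
  let '(c, d, k) := s in let '(a, b, g) := l in a (+) b (+) c (+) d == g (+) k.

Definition step (s l : bit3) (x z : bool) : bit3 :=
  let '(c, d, k) := s in let '(a, b, g) := l in (maj x a c, maj (x (+) z) b d, maj z g k).

Definition letter0 : bit3 := (false, false, false).

Fixpoint run (s : bit3) (w : seq bit3) (X Z : nat -> bool) (j : nat) : bit3 :=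
  if j is j'.+1 then step (run s w X Z j') (nth letter0 w j') (X j') (Z j') else s.

Definition run_ok (s : bit3) (w : seq bit3) (X Z : nat -> bool) : Prop :=
  forall j, j < size w -> step_ok (run s w X Z j) (nth letter0 w j).

Lemma run_cons s l w X Z j :
  run s (l :: w) X Z j.+1 = run (step s l (X 0) (Z 0)) w (X \o succn) (Z \o succn) j.
Proof.
elim: j => [//|j IH].
by rewrite -[LHS]/(step (run s (l :: w) X Z j.+1) (nth letter0 w j) (X j.+1) (Z j.+1)) IH.
Qed.

Lemma run_carries s w X Z j :
  run s w X Z j =
  (carry X (fun i => (nth letter0 w i).1.1) s.1.1 j,
   carry (fun i => X i (+) Z i) (fun i => (nth letter0 w i).1.2) s.1.2 j,
   carry Z (fun i => (nth letter0 w i).2) s.2 j).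
Proof.
elim: j => [|j IH] /=; first by case: s => [[]].
by rewrite IH; case: (nth letter0 w j) => [[a b] g].
Qed.

Definition post (S : seq bit3) (l : bit3) : seq bit3 :=
  [seq t <- all_bit3 | has (fun s => step_ok s l &&
     has (fun xz : bool * bool => step s l xz.1 xz.2 == t)
       [:: (false, false); (false, true); (true, false); (true, true)]) S].

Lemma postP S l t :
  t \in post S l <-> exists s, [/\ s \in S, step_ok s l & exists x z, step s l x z = t].
Proof.
rewrite mem_filter mem_all_bit3 andbT; split.
  case/hasP=> s hs /andP[ho /hasP[[x z] _ /eqP e]].
  by exists s; split => //; exists x, z.
case=> s [hs ho [x [z e]]]; apply/hasP; exists s; rewrite // ho.
by apply/hasP; exists (x, z); [case: x {e}; case: z | rewrite /= e].
Qed.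

Lemma foldl_postP w S t :
  t \in foldl post S w <->
  exists s X Z, [/\ s \in S, run_ok s w X Z & run s w X Z (size w) = t].
Proof.
elim: w S => [|l w IH] S.
  split=> [h | [s [X [Z [hs _ <-]]]] //].
  by exists t, xpred0, xpred0.
rewrite [foldl _ _ _]/= IH -[size (l :: w)]/(size w).+1; split.
  case=> s1 [X [Z [/postP[s [hs ho [x [z e]]]] hr <-]]].
  pose X' i := if i is i'.+1 then X i' else x.
  pose Z' i := if i is i'.+1 then Z i' else z.
  exists s, X', Z'; split=> //; last by rewrite run_cons e.
  by case=> [|j] hj //; rewrite run_cons e; apply: hr.
case=> s [X [Z [hs hr <-]]].
exists (step s l (X 0) (Z 0)), (X \o succn), (Z \o succn); split.
- by apply/postP; exists s; split => //; [apply: (hr 0) | exists (X 0), (Z 0)].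
- by move=> j hj; have := hr j.+1 hj; rewrite run_cons.
- by rewrite run_cons.
Qed.

(* When z wraps around from bit n-1 to bit 0, its carry restarts at 0. *)
Definition reset_z (S : seq bit3) : seq bit3 :=
  [seq t <- all_bit3 | (t.2 == false) && has (fun s => s.1 == t.1) S].

Lemma reset_zP S t : t \in reset_z S <-> t.2 = false /\ exists2 s, s \in S & s.1 = t.1.
Proof.
rewrite mem_filter mem_all_bit3 andbT; split.
  by case/andP=> /eqP -> /hasP[s hs /eqP e]; split => //; exists s.
by case=> -> [s hs e]; rewrite eqxx; apply/hasP; exists s => //; apply/eqP.
Qed.

(* The z-carry into bit r is guessed: the first component of a [guess] follows the
   runs started with guess false, the second those started with guess true. *)
Definition guess := (seq bit3 * seq bit3)%type.

Definition init_guess : guess := ([:: (false, false, false)], [:: (false, false, true)]).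

Definition post2 (Q : guess) (l : bit3) : guess := (post Q.1 l, post Q.2 l).

Definition reset2 (Q : guess) : guess := (reset_z Q.1, reset_z Q.2).

(* No run returns to bit r with the z-carry it guessed there. *)
Definition rejecting (Q : guess) : bool :=
  ~~ has (fun s => s.2 == false) Q.1 && ~~ has (fun s => s.2 == true) Q.2.

Lemma foldl_post2 w Q : foldl post2 Q w = (foldl post Q.1 w, foldl post Q.2 w).
Proof. by elim: w Q => [|l w IH] [Q1 Q2] //=; rewrite IH. Qed.

(* [u] carries bits 0 .. n-r-1 of x, y (bits r .. n-1 of z) and [v] the remaining ones. *)
Definition rejects (u v : seq bit3) : bool :=
  rejecting (foldl post2 (reset2 (foldl post2 init_guess u)) v).

Definition accepts_with (kap : bool) (u v : seq bit3) : Prop :=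
  exists X1 Z1 X2 Z2, let c := (run (false, false, kap) u X1 Z1 (size u)).1 in
  [/\ run_ok (false, false, kap) u X1 Z1, run_ok (c, false) v X2 Z2
    & (run (c, false) v X2 Z2 (size v)).2 = kap].

Lemma accepts_withP kap u v :
  (exists2 t, t \in foldl post (reset_z (foldl post [:: (false, false, kap)] u)) v & t.2 = kap)
  <-> accepts_with kap u v.
Proof.
split.
  case=> t /foldl_postP[[[c d] k] [X2 [Z2 [/reset_zP[/= -> [s1 hs1 e1]] hr2 e3]]]] ht.
  move/foldl_postP: hs1 => [s [X1 [Z1 [/[!inE]/eqP-> hr1 e2]]]].
  by exists X1, Z1, X2, Z2; rewrite e2 e1; split; rewrite // e3.
case=> X1 [Z1 [X2 [Z2 /= [hr1 hr2 e]]]].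
exists (run ((run (false, false, kap) u X1 Z1 (size u)).1, false) v X2 Z2 (size v)) => //.
apply/foldl_postP; do 3!eexists; split; [|exact: hr2|by []].
apply/reset_zP; split=> //; exists (run (false, false, kap) u X1 Z1 (size u)) => //.
by apply/foldl_postP; exists (false, false, kap), X1, Z1; rewrite inE.
Qed.

Lemma rejectsF u v : rejects u v = false <-> exists kap, accepts_with kap u v.
Proof.
rewrite /rejects !foldl_post2 /rejecting /=; split.
  move/negbT; rewrite negb_and !negbK => /orP[] /hasP[t ht /eqP e].
  - by exists false; apply/accepts_withP; exists t.
  - by exists true; apply/accepts_withP; exists t.
case=> kap /accepts_withP[t ht e]; apply/negbTE; rewrite negb_and !negbK.
by apply/orP; case: kap e ht => e ht; [right | left]; apply/hasP; exists t; rewrite // e.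
Qed.

(** * The equation is solvable iff the automaton accepts *)

Section Words.
Variables (n r : nat) (a b g : bv n.+1).
Hypothesis hr : r <= n.
Local Notation N := n.+1.

Definition head_word : seq bit3 :=
  [seq (vbit a j, vbit b j, vbit g (j + r)) | j <- iota 0 (N - r)].

Definition tail_word : seq bit3 :=
  [seq (vbit a (N - r + j), vbit b (N - r + j), vbit g j) | j <- iota 0 r].

Lemma size_head_word : size head_word = N - r.
Proof. by rewrite size_map size_iota. Qed.

Lemma size_tail_word : size tail_word = r.
Proof. by rewrite size_map size_iota. Qed.

Lemma nth_head_word j : j < N - r ->
  nth letter0 head_word j = (vbit a j, vbit b j, vbit g (j + r)).
Proof. by move=> hj; rewrite (nth_map 0) ?size_iota // nth_iota. Qed.

Lemma nth_tail_word j : j < r ->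
  nth letter0 tail_word j = (vbit a (N - r + j), vbit b (N - r + j), vbit g j).
Proof. by move=> hj; rewrite (nth_map 0) ?size_iota // nth_iota. Qed.

Lemma rot_src_head j : j < N - r -> rot_src N r (j + r) = j.
Proof. by move=> hj; rewrite /rot_src -addnA subnKC ?modnDr ?modn_small //; lia. Qed.

Lemma rot_src_tail j : j < r -> rot_src N r j = N - r + j.
Proof. by move=> hj; rewrite /rot_src addnC modn_small //; lia. Qed.

Section Carries.
Variables (x y : bv N) (X Z : nat -> bool).

Lemma run_head kap :
  (forall i, i < N - r -> X i = vbit x i /\ Z i = vbit x i (+) vbit y i) ->
  kap = zcarry r x y g r ->
  forall j, j <= N - r ->
  run (false, false, kap) head_word X Z j =
    (carry (vbit x) (vbit a) false j, carry (vbit y) (vbit b) false j, zcarry r x y g (r + j)).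
Proof.
move=> hXZ -> j hj; rewrite run_carries /zcarry carryD.
congr (_, _, _); apply: eq_carry => i hi; have hiN : i < N - r by apply: leq_trans hj.
all: rewrite nth_head_word //=; have [hX hZ] := hXZ i hiN; rewrite ?hX ?hZ; split=> //.
- by case: (vbit x i) (vbit y i) => [] [].
- by rewrite (addnC r) vbit_rotl_xor ?rot_src_head //; lia.
- by rewrite addnC.
Qed.

Lemma run_tail :
  (forall i, i < r -> X i = vbit x (N - r + i) /\ Z i = vbit x (N - r + i) (+) vbit y (N - r + i)) ->
  forall j, j <= r ->
  run (carry (vbit x) (vbit a) false (N - r), carry (vbit y) (vbit b) false (N - r), false)
      tail_word X Z j =
    (carry (vbit x) (vbit a) false (N - r + j), carry (vbit y) (vbit b) false (N - r + j),
     zcarry r x y g j).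
Proof.
move=> hXZ j hj; rewrite run_carries /zcarry !carryD.
congr (_, _, _); apply: eq_carry => i hi; have hir : i < r by apply: leq_trans hj.
all: rewrite nth_tail_word //=; have [hX hZ] := hXZ i hir; rewrite ?hX ?hZ; split=> //.
- by case: (vbit x _) (vbit y _) => [] [].
- by rewrite vbit_rotl_xor ?rot_src_tail //; lia.
Qed.

End Carries.

Lemma xr_bitwise_accepts x y :
  xr_bitwise r a b g x y -> accepts_with (zcarry r x y g r) head_word tail_word.
Proof.
move=> hE; pose X2 i := vbit x (N - r + i); pose Y2 i := vbit y (N - r + i).
exists (vbit x), (fun i => vbit x i (+) vbit y i), X2, (fun i => X2 i (+) Y2 i); cbv zeta.
have hh := run_head (fun i _ => conj erefl erefl) erefl.
have ht := @run_tail x y X2 (fun i => X2 i (+) Y2 i) (fun i _ => conj erefl erefl).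
rewrite size_head_word size_tail_word hh //; split.
- move=> j; rewrite size_head_word => hj; rewrite hh ?(ltnW hj) // nth_head_word //=.
  by have := hE (j + r); rewrite /= rot_src_head // addnC => -> //; lia.
- move=> j; rewrite size_tail_word => hj; rewrite ht ?(ltnW hj) // nth_tail_word //=.
  by have := hE j; rewrite /= rot_src_tail // => -> //; lia.
- by rewrite ht.
Qed.

Lemma accepts_xr_bitwise kap :
  accepts_with kap head_word tail_word -> exists x y, xr_bitwise r a b g x y.
Proof.
case=> X1 [Z1 [X2 [Z2]]]; cbv zeta; rewrite size_head_word size_tail_word => -[hr1 hr2 hf].
pose Xf j := if j < N - r then X1 j else X2 (j - (N - r)).
pose Zf j := if j < N - r then Z1 j else Z2 (j - (N - r)).
pose x := bv_of_bits N Xf; pose y := bv_of_bits N (fun j => Xf j (+) Zf j).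
exists x, y.
have xorK (p q : bool) : q = p (+) (p (+) q) by case: p q => [] [].
have hU i : i < N - r -> X1 i = vbit x i /\ Z1 i = vbit x i (+) vbit y i.
  by move=> hi; rewrite !vbit_of_bits; try lia; rewrite /Xf /Zf hi -xorK.
have hV i : i < r -> X2 i = vbit x (N - r + i) /\
                    Z2 i = vbit x (N - r + i) (+) vbit y (N - r + i).
  move=> hi; rewrite !vbit_of_bits; try lia.
  by rewrite /Xf /Zf ltnNge leq_addr /= addKn -xorK.
have ec : (run (false, false, kap) head_word X1 Z1 (N - r)).1 =
          (run (false, false, zcarry r x y g r) head_word X1 Z1 (N - r)).1.
  by rewrite !run_carries.
rewrite ec (run_head hU erefl) //= in hr2 hf.
have ek : kap = zcarry r x y g r by rewrite -hf run_tail.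
move=> k hk /=.
have [hrk|hkr] := leqP r k.
  have hj : k - r < N - r by lia.
  have := hr1 (k - r); rewrite size_head_word => /(_ hj).
  rewrite (run_head hU ek) ?(ltnW hj) // nth_head_word // subnK // subnKC // => /eqP.
  by rewrite -[in rot_src _ _ k](subnK hrk) rot_src_head.
have := hr2 k; rewrite size_tail_word => /(_ hkr).
by rewrite run_tail ?(ltnW hkr) // nth_tail_word // rot_src_tail // => /eqP.
Qed.

Lemma adp_count_eq0 : (adp_count r a b g == 0) = rejects head_word tail_word.
Proof.
have hrN : r <= N by apply: leqW.
apply/idP/idP=> [h0 | hrej].
  apply/negPn/negP => /negbTE/rejectsF[kap /accepts_xr_bitwise[x [y hxy]]].
  move: h0; rewrite cards_eq0 => /eqP/setP/(_ (x, y)); rewrite !inE => /negbT/negP; apply.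
  exact: (xr_holdsP a b g x y hrN).2 hxy.
rewrite cards_eq0; apply/eqP/setP=> -[x y]; rewrite !inE; apply/negbTE/negP => hxy.
have : rejects head_word tail_word = false.
  apply/rejectsF; exists (zcarry r x y g r).
  exact/xr_bitwise_accepts/(xr_holdsP a b g x y hrN).
by rewrite hrej.
Qed.

Definition word : seq bit3 := head_word ++ tail_word.

Lemma size_word : size word = N.
Proof. by rewrite size_cat size_head_word size_tail_word subnK // leqW. Qed.

Lemma nth_word j : j < N -> nth letter0 word j = (vbit a j, vbit b j, vbit g ((j + r) %% N)).
Proof.
move=> hj; rewrite nth_cat size_head_word.
have [hjr|hjr] := ltnP j (N - r).
  by rewrite nth_head_word // modn_small //; lia.
rewrite nth_tail_word; last by lia.
have -> : (j + r) %% N = j - (N - r) by rewrite modn_subn; lia.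
by rewrite subnKC.
Qed.

End Words.

Lemma rot_srcK n r j : r <= n -> j < n -> rot_src n r ((j + r) %% n) = j.
Proof.
move=> hr hj; rewrite /rot_src modnDml -addnA subnKC // modnDr modn_small //.
Qed.

Lemma rot_srcKV n r k : r <= n -> k < n -> (rot_src n r k + r) %% n = k.
Proof.
move=> hr hk; rewrite /rot_src modnDml -addnA subnK // modnDr modn_small //.
Qed.

Definition word_of n r (t : bv n.+1 * bv n.+1 * bv n.+1) : seq bit3 := word r t.1.1 t.1.2 t.2.

Lemma word_of_inj n r : r <= n -> injective (@word_of n r).
Proof.
move=> hr [[a b] g] [[a' b'] g'] /= e.
have en j : j < n.+1 -> nth letter0 (word r a b g) j = nth letter0 (word r a' b' g') j.
  by move=> _; rewrite /word_of /= in e; rewrite e.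
have ea : a = a' by apply: vbit_inj => j hj; have := en j hj; rewrite !nth_word // => -[].
have eb : b = b' by apply: vbit_inj => j hj; have := en j hj; rewrite !nth_word // => -[].
suff -> : g = g' by rewrite ea eb.
apply: vbit_inj => k hk; have hs : rot_src n.+1 r k < n.+1 by rewrite ltn_mod.
by have := en _ hs; rewrite !nth_word // rot_srcKV ?(leqW hr) // => -[].
Qed.

Lemma word_of_onto n r w : r <= n -> size w = n.+1 -> w \in codom (@word_of n r).
Proof.
move=> hr hw; apply/codomP.
exists (bv_of_bits n.+1 (fun j => (nth letter0 w j).1.1),
        bv_of_bits n.+1 (fun j => (nth letter0 w j).1.2),
        bv_of_bits n.+1 (fun k => (nth letter0 w (rot_src n.+1 r k)).2)).
apply: (@eq_from_nth bit3 letter0) => [|j]; first by rewrite hw; apply/esym/size_word.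
rewrite hw => hj; rewrite /word_of nth_word //= !vbit_of_bits ?ltn_mod // rot_srcK ?(leqW hr) //.
by case: (nth letter0 w j) => [[]].
Qed.

(** * Counting rejected words *)

Definition sum_bit3 (V : nmodType) (f : bit3 -> V) : V :=
  foldr (fun l acc => f l + acc)%R 0%R all_bit3.

Lemma sum_bit3E (V : nmodType) (f : bit3 -> V) : sum_bit3 f = (\sum_(l <- all_bit3) f l)%R.
Proof. by rewrite /sum_bit3 /all_bit3 !big_cons big_nil. Qed.

Lemma eq_sum_bit3 (V : nmodType) (f g : bit3 -> V) :
  f =1 g -> sum_bit3 f = sum_bit3 g.
Proof. by move=> e; rewrite !sum_bit3E; apply: eq_bigr. Qed.

Fixpoint words (k : nat) : seq (seq bit3) :=
  if k is k'.+1 then [seq l :: w | l <- all_bit3, w <- words k'] else [:: [::]].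

Lemma mem_words k w : (w \in words k) = (size w == k).
Proof.
elim: k w => [|k IH] w; first by rewrite inE; case: w.
apply/allpairsP/idP => [[[l w'] /= [_ hw' ->]] | ]; first by rewrite /= eqSS -IH.
by case: w => [//|l w] /=; rewrite eqSS -IH => hw; exists (l, w); rewrite mem_all_bit3.
Qed.

Lemma uniq_words k : uniq (words k).
Proof.
elim: k => [//|k IH]; apply: (@allpairs_uniq _ _ _ (fun l w => l :: w)) => //.
by move=> [l w] [l' w'] _ _ /= [-> ->].
Qed.

Lemma count_wordsS k (F : pred (seq bit3)) :
  count F (words k.+1) = sum_bit3 (fun l => count (fun w => F (l :: w)) (words k)).
Proof.
have -> : words k.+1 = flatten [seq [seq l :: w | w <- words k] | l <- all_bit3] by [].
by rewrite count_flatten /sum_bit3; elim: all_bit3 => //= l s ->; rewrite count_map.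
Qed.

Lemma card_count_codom (T : finType) (S : eqType) (f : T -> S) (s : seq S) (P : pred S) :
  injective f -> uniq s -> s =i codom f -> #|[set t | P (f t)]| = count P s.
Proof.
move=> finj suniq es.
have /permP-> : perm_eq s (codom f) by apply: uniq_perm; rewrite // map_inj_uniq ?enum_uniq.
rewrite codomE count_map cardsE cardE /enum_mem size_filter.
by rewrite (@eq_filter _ _ predT) ?filter_predT ?enumT.
Qed.

Fixpoint rej_tail (r : nat) (Q : guess) : nat :=
  if r is r'.+1 then sum_bit3 (fun l => rej_tail r' (post2 Q l)) else rejecting Q.

Fixpoint rej_count (m r : nat) (P : guess) : nat :=
  if m is m'.+1 then sum_bit3 (fun l => rej_count m' r (post2 P l)) else rej_tail r (reset2 P).

Lemma count_rej_tail r Q :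
  count (fun v => rejecting (foldl post2 Q v)) (words r) = rej_tail r Q.
Proof.
elim: r Q => [|r IH] Q; first by rewrite /= addn0.
by rewrite count_wordsS; apply: eq_sum_bit3 => l; apply: IH.
Qed.

Lemma count_rej_count m r P :
  count (fun w => rejecting (foldl post2 (reset2 (foldl post2 P (take m w))) (drop m w)))
        (words (m + r)) = rej_count m r P.
Proof.
elim: m P => [|m IH] P.
  rewrite add0n -[rej_count 0 r P]/(rej_tail r (reset2 P)) -count_rej_tail.
  by apply: eq_count => w; rewrite take0 drop0.
by rewrite addSn count_wordsS; apply: eq_sum_bit3 => l; apply: IH.
Qed.

Lemma adpXR_eq0 n r (a b g : bv n) : (adpXR r a b g == 0%R) = (adp_count r a b g == 0).
Proof.
rewrite /adpXR mulf_eq0 invr_eq0 !pnatr_eq0 [4 ^ n == 0]eqn0Ngt expn_gt0.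
by rewrite orbF.
Qed.

Lemma Nzero_rej_count n r : r <= n -> Nzero n.+1 r = rej_count (n.+1 - r) r init_guess.
Proof.
move=> hr; pose split_rejects w := rejects (take (n.+1 - r) w) (drop (n.+1 - r) w).
have -> : Nzero n.+1 r = #|[set t | split_rejects (@word_of n r t)]|.
  apply: eq_card => -[[a b] g]; rewrite !inE adpXR_eq0 adp_count_eq0 //.
  by rewrite /split_rejects /word_of /word take_size_cat ?drop_size_cat ?size_head_word.
rewrite (card_count_codom _ (s := words (n.+1 - r + r))).
- exact: count_rej_count.
- exact: word_of_inj.
- exact: uniq_words.
move=> w; rewrite mem_words subnK ?leqW //; apply/eqP/idP => [|/codomP[t ->]].
  exact: word_of_onto.
by rewrite /word_of size_word.
Qed.

(** * Closed form of the number of rejected words *)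

Section ClosedForm.
Local Open Scope ring_scope.

(* The coefficients come from diagonalizing the transfer operators [post2] on the reachable
   guesses (eigenvalues 8, 4, 1 after the reset and 8, 4, 3, 1 before it); 4410 clears their
   denominators.  [tail_table_ok] and [head_table_ok] check that they satisfy the recurrences
   defining [rej_tail] and [rej_count], which is all that [rej_tail_form] and
   [rej_count_form] use. *)
Definition tail_table : seq (guess * seq int) := [::
  (([::], [:: (false,false,false)]), [:: 2520; 1470; 420]);
  (([::], [::]), [:: 4410; 0; 0]);
  (([::], [:: (false,false,false); (false,false,true); (false,true,false); (false,true,true)]), [:: 0; 0; 0]);
  (([::], [:: (false,false,false); (false,false,true); (true,false,false); (true,false,true)]), [:: 0; 0; 0]);
  (([::], [:: (false,false,false); (false,true,false); (true,false,false); (true,true,false)]), [:: 0; 4410; 0]);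
  (([::], [:: (false,false,false); (false,false,true); (false,true,false); (true,false,false); (true,false,true); (true,true,false)]), [:: 0; 0; 0]);
  (([::], [:: (false,false,false); (false,false,true); (false,true,true); (true,false,false); (true,false,true); (true,true,true)]), [:: 0; 0; 0]);
  (([::], [:: (false,false,false); (false,true,false); (false,true,true); (true,false,false); (true,true,false); (true,true,true)]), [:: 0; 0; 0]);
  (([::], [:: (false,false,true); (false,true,false); (false,true,true); (true,false,true); (true,true,false); (true,true,true)]), [:: 0; 0; 0]);
  (([::], [:: (false,false,false); (false,false,true); (false,true,false); (false,true,true); (true,false,false); (true,true,false)]), [:: 0; 0; 0]);
  (([::], [:: (false,false,false); (false,false,true); (false,true,false); (false,true,true); (true,false,true); (true,true,true)]), [:: 0; 0; 0]);
  (([::], [:: (false,false,false); (false,true,false); (true,false,false); (true,false,true); (true,true,false); (true,true,true)]), [:: 0; 0; 0]);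
  (([::], [:: (false,false,true); (false,true,true); (true,false,false); (true,false,true); (true,true,false); (true,true,true)]), [:: 0; 0; 0]);
  (([::], [:: (false,false,false); (false,false,true); (false,true,false); (false,true,true); (true,false,false); (true,false,true)]), [:: 0; 0; 0]);
  (([::], [:: (false,false,false); (false,false,true); (false,true,false); (false,true,true); (true,true,false); (true,true,true)]), [:: 0; 0; 0]);
  (([::], [:: (false,false,false); (false,false,true); (true,false,false); (true,false,true); (true,true,false); (true,true,true)]), [:: 0; 0; 0]);
  (([::], [:: (false,true,false); (false,true,true); (true,false,false); (true,false,true); (true,true,false); (true,true,true)]), [:: 0; 0; 0]);
  (([::], [:: (false,false,false); (false,false,true); (false,true,false); (false,true,true); (true,false,true); (true,true,false); (true,true,true)]), [:: 0; 0; 0]);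
  (([::], [:: (false,false,true); (false,true,false); (false,true,true); (true,false,false); (true,false,true); (true,true,false); (true,true,true)]), [:: 0; 0; 0]);
  (([::], [:: (false,false,false); (false,false,true); (false,true,false); (false,true,true); (true,false,false); (true,true,false); (true,true,true)]), [:: 0; 0; 0]);
  (([::], [:: (false,false,false); (false,true,false); (false,true,true); (true,false,false); (true,false,true); (true,true,false); (true,true,true)]), [:: 0; 0; 0]);
  (([::], [:: (false,false,false); (false,false,true); (false,true,false); (false,true,true); (true,false,false); (true,false,true); (true,true,true)]), [:: 0; 0; 0]);
  (([::], [:: (false,false,false); (false,false,true); (false,true,true); (true,false,false); (true,false,true); (true,true,false); (true,true,true)]), [:: 0; 0; 0]);
  (([::], [:: (false,false,false); (false,false,true); (false,true,false); (false,true,true); (true,false,false); (true,false,true); (true,true,false)]), [:: 0; 0; 0]);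
  (([::], [:: (false,false,false); (false,false,true); (false,true,false); (true,false,false); (true,false,true); (true,true,false); (true,true,true)]), [:: 0; 0; 0]);
  (([:: (false,true,false); (true,false,false); (true,true,false)], [::]), [:: 315; 0; -2520]);
  (([:: (false,false,false); (false,true,false); (true,false,false); (true,true,false)], [::]), [:: 0; 0; 0]);
  (([:: (false,false,false); (false,false,true); (false,true,false); (false,true,true); (true,false,false); (true,false,true)], [::]), [:: 0; 0; 0]);
  (([:: (false,true,false); (false,true,true); (true,true,false); (true,true,true)], [::]), [:: 0; 0; 0]);
  (([:: (true,false,false); (true,false,true); (true,true,false); (true,true,true)], [::]), [:: 0; 0; 0]);
  (([:: (true,true,false)], [::]), [:: 2520; 0; -2520]);
  (([:: (false,true,false); (false,true,true); (true,false,false); (true,false,true); (true,true,false); (true,true,true)], [::]), [:: 0; 0; 0]);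
  (([:: (false,false,false); (false,false,true); (false,true,false); (false,true,true); (true,true,false); (true,true,true)], [::]), [:: 0; 0; 0]);
  (([:: (false,false,false); (false,false,true); (true,false,false); (true,false,true); (true,true,false); (true,true,true)], [::]), [:: 0; 0; 0]);
  (([:: (false,false,false); (false,false,true); (false,true,false); (false,true,true); (true,false,false); (true,true,false)], [::]), [:: 0; 0; 0]);
  (([:: (false,false,false); (false,false,true); (false,true,false); (false,true,true); (true,false,true); (true,true,true)], [::]), [:: 0; 0; 0]);
  (([:: (false,false,false); (false,false,true); (false,true,false); (true,false,false); (true,false,true); (true,true,false)], [::]), [:: 0; 0; 0]);
  (([:: (false,false,false); (false,false,true); (false,true,true); (true,false,false); (true,false,true); (true,true,true)], [::]), [:: 0; 0; 0]);
  (([:: (false,false,false); (false,true,false); (false,true,true); (true,false,false); (true,false,true); (true,true,false); (true,true,true)], [::]), [:: 0; 0; 0]);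
  (([:: (false,false,true); (false,true,false); (false,true,true); (true,false,false); (true,false,true); (true,true,false); (true,true,true)], [::]), [:: 0; 0; 0]);
  (([:: (false,false,false); (false,true,false); (true,false,false); (true,false,true); (true,true,false); (true,true,true)], [::]), [:: 0; 0; 0]);
  (([:: (false,false,true); (false,true,true); (true,false,false); (true,false,true); (true,true,false); (true,true,true)], [::]), [:: 0; 0; 0]);
  (([:: (false,false,false); (false,true,false); (false,true,true); (true,false,false); (true,true,false); (true,true,true)], [::]), [:: 0; 0; 0]);
  (([:: (false,false,true); (false,true,false); (false,true,true); (true,false,true); (true,true,false); (true,true,true)], [::]), [:: 0; 0; 0]);
  (([:: (false,false,false); (false,false,true); (false,true,false); (false,true,true); (true,false,false); (true,false,true); (true,true,false)], [::]), [:: 0; 0; 0]);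
  (([:: (false,false,false); (false,false,true); (false,true,false); (false,true,true); (true,false,false); (true,false,true); (true,true,true)], [::]), [:: 0; 0; 0]);
  (([:: (false,false,false); (false,false,true); (false,true,false); (true,false,false); (true,false,true); (true,true,false); (true,true,true)], [::]), [:: 0; 0; 0]);
  (([:: (false,false,false); (false,false,true); (false,true,true); (true,false,false); (true,false,true); (true,true,false); (true,true,true)], [::]), [:: 0; 0; 0]);
  (([:: (false,false,false); (false,false,true); (false,true,false); (false,true,true); (true,false,false); (true,true,false); (true,true,true)], [::]), [:: 0; 0; 0]);
  (([:: (false,false,false); (false,false,true); (false,true,false); (false,true,true); (true,false,true); (true,true,false); (true,true,true)], [::]), [:: 0; 0; 0]);
  (([::], [:: (false,true,false); (true,false,false); (true,true,false)]), [:: 315; 3675; 420]);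
  (([::], [:: (false,true,false); (false,true,true); (true,true,false); (true,true,true)]), [:: 0; 0; 0]);
  (([::], [:: (true,false,false); (true,false,true); (true,true,false); (true,true,true)]), [:: 0; 0; 0]);
  (([::], [:: (true,true,false)]), [:: 2520; 1470; 420]);
  (([::], [:: (false,false,false); (false,true,false); (true,false,false)]), [:: 315; 3675; 420]);
  (([:: (false,false,false); (true,false,false)], [::]), [:: 630; 0; -5040]);
  (([:: (false,false,false)], [::]), [:: 2520; 0; -2520]);
  (([:: (false,false,false); (false,false,true); (true,false,false); (true,false,true)], [::]), [:: 0; 0; 0]);
  (([:: (false,false,false); (false,false,true); (false,true,false); (false,true,true)], [::]), [:: 0; 0; 0]);
  (([:: (true,false,false)], [::]), [:: 2520; 0; -2520]);
  (([::], [:: (false,false,false); (true,false,false); (true,true,false)]), [:: 315; 3675; 420]);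
  (([::], [:: (true,false,false)]), [:: 2520; 1470; 420]);
  (([:: (false,false,false)], [:: (false,false,false)]), [:: 2520; 0; -2520]);
  (([:: (false,false,false); (false,false,true); (false,true,false); (false,true,true)], [:: (false,false,false); (false,false,true); (false,true,false); (false,true,true)]), [:: 0; 0; 0]);
  (([:: (false,false,false); (false,false,true); (true,false,false); (true,false,true)], [:: (false,false,false); (false,false,true); (true,false,false); (true,false,true)]), [:: 0; 0; 0]);
  (([:: (false,false,false); (false,true,false); (true,false,false); (true,true,false)], [:: (false,false,false); (false,true,false); (true,false,false); (true,true,false)]), [:: 0; 0; 0]);
  (([:: (false,false,false); (false,false,true); (false,true,false); (true,false,false); (true,false,true); (true,true,false)], [:: (false,false,false); (false,false,true); (false,true,false); (true,false,false); (true,false,true); (true,true,false)]), [:: 0; 0; 0]);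
  (([:: (false,false,false); (false,false,true); (false,true,true); (true,false,false); (true,false,true); (true,true,true)], [:: (false,false,false); (false,false,true); (false,true,true); (true,false,false); (true,false,true); (true,true,true)]), [:: 0; 0; 0]);
  (([:: (false,false,false); (false,true,false); (false,true,true); (true,false,false); (true,true,false); (true,true,true)], [:: (false,false,false); (false,true,false); (false,true,true); (true,false,false); (true,true,false); (true,true,true)]), [:: 0; 0; 0]);
  (([:: (false,false,true); (false,true,false); (false,true,true); (true,false,true); (true,true,false); (true,true,true)], [:: (false,false,true); (false,true,false); (false,true,true); (true,false,true); (true,true,false); (true,true,true)]), [:: 0; 0; 0]);
  (([:: (false,false,false); (false,false,true); (false,true,false); (false,true,true); (true,false,false); (true,true,false)], [:: (false,false,false); (false,false,true); (false,true,false); (false,true,true); (true,false,false); (true,true,false)]), [:: 0; 0; 0]);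
  (([:: (false,false,false); (false,false,true); (false,true,false); (false,true,true); (true,false,true); (true,true,true)], [:: (false,false,false); (false,false,true); (false,true,false); (false,true,true); (true,false,true); (true,true,true)]), [:: 0; 0; 0]);
  (([:: (false,false,false); (false,true,false); (true,false,false); (true,false,true); (true,true,false); (true,true,true)], [:: (false,false,false); (false,true,false); (true,false,false); (true,false,true); (true,true,false); (true,true,true)]), [:: 0; 0; 0]);
  (([:: (false,false,true); (false,true,true); (true,false,false); (true,false,true); (true,true,false); (true,true,true)], [:: (false,false,true); (false,true,true); (true,false,false); (true,false,true); (true,true,false); (true,true,true)]), [:: 0; 0; 0]);
  (([:: (false,false,false); (false,false,true); (false,true,false); (false,true,true); (true,false,false); (true,false,true)], [:: (false,false,false); (false,false,true); (false,true,false); (false,true,true); (true,false,false); (true,false,true)]), [:: 0; 0; 0]);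
  (([:: (false,false,false); (false,false,true); (false,true,false); (false,true,true); (true,true,false); (true,true,true)], [:: (false,false,false); (false,false,true); (false,true,false); (false,true,true); (true,true,false); (true,true,true)]), [:: 0; 0; 0]);
  (([:: (false,false,false); (false,false,true); (true,false,false); (true,false,true); (true,true,false); (true,true,true)], [:: (false,false,false); (false,false,true); (true,false,false); (true,false,true); (true,true,false); (true,true,true)]), [:: 0; 0; 0]);
  (([:: (false,true,false); (false,true,true); (true,false,false); (true,false,true); (true,true,false); (true,true,true)], [:: (false,true,false); (false,true,true); (true,false,false); (true,false,true); (true,true,false); (true,true,true)]), [:: 0; 0; 0]);
  (([:: (false,false,false); (false,false,true); (false,true,false); (false,true,true); (true,false,true); (true,true,false); (true,true,true)], [:: (false,false,false); (false,false,true); (false,true,false); (false,true,true); (true,false,true); (true,true,false); (true,true,true)]), [:: 0; 0; 0]);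
  (([:: (false,false,true); (false,true,false); (false,true,true); (true,false,false); (true,false,true); (true,true,false); (true,true,true)], [:: (false,false,true); (false,true,false); (false,true,true); (true,false,false); (true,false,true); (true,true,false); (true,true,true)]), [:: 0; 0; 0]);
  (([:: (false,false,false); (false,false,true); (false,true,false); (false,true,true); (true,false,false); (true,true,false); (true,true,true)], [:: (false,false,false); (false,false,true); (false,true,false); (false,true,true); (true,false,false); (true,true,false); (true,true,true)]), [:: 0; 0; 0]);
  (([:: (false,false,false); (false,true,false); (false,true,true); (true,false,false); (true,false,true); (true,true,false); (true,true,true)], [:: (false,false,false); (false,true,false); (false,true,true); (true,false,false); (true,false,true); (true,true,false); (true,true,true)]), [:: 0; 0; 0]);
  (([:: (false,false,false); (false,false,true); (false,true,false); (false,true,true); (true,false,false); (true,false,true); (true,true,true)], [:: (false,false,false); (false,false,true); (false,true,false); (false,true,true); (true,false,false); (true,false,true); (true,true,true)]), [:: 0; 0; 0]);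
  (([:: (false,false,false); (false,false,true); (false,true,true); (true,false,false); (true,false,true); (true,true,false); (true,true,true)], [:: (false,false,false); (false,false,true); (false,true,true); (true,false,false); (true,false,true); (true,true,false); (true,true,true)]), [:: 0; 0; 0]);
  (([:: (false,false,false); (false,false,true); (false,true,false); (false,true,true); (true,false,false); (true,false,true); (true,true,false)], [:: (false,false,false); (false,false,true); (false,true,false); (false,true,true); (true,false,false); (true,false,true); (true,true,false)]), [:: 0; 0; 0]);
  (([:: (false,false,false); (false,false,true); (false,true,false); (true,false,false); (true,false,true); (true,true,false); (true,true,true)], [:: (false,false,false); (false,false,true); (false,true,false); (true,false,false); (true,false,true); (true,true,false); (true,true,true)]), [:: 0; 0; 0]);
  (([:: (false,false,false); (true,false,false); (true,true,false)], [::]), [:: 315; 0; -2520]);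
  (([::], [:: (false,false,false); (false,true,false); (true,true,false)]), [:: 315; 3675; 420]);
  (([::], [:: (false,true,false)]), [:: 2520; 1470; 420]);
  (([::], [:: (false,false,false); (false,true,false)]), [:: 630; 2940; 840]);
  (([::], [:: (false,false,false); (true,false,false)]), [:: 630; 2940; 840]);
  (([:: (false,false,false); (false,true,false); (true,false,false)], [::]), [:: 315; 0; -2520]);
  (([:: (false,false,false); (false,true,false); (true,true,false)], [::]), [:: 315; 0; -2520]);
  (([:: (false,true,false)], [::]), [:: 2520; 0; -2520]);
  (([:: (false,false,false); (false,true,false)], [::]), [:: 630; 0; -5040])].
Definition head_table : seq (guess * seq int) := [::
  (([:: (false,false,false)], [:: (false,false,true)]), [:: 684; 1827; -180; 1050; -1225; -3500; -504; 588; 1680; -600; 280; -100]);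
  (([:: (false,false,false)], [::]), [:: 2547; 0; -216; 525; 0; -4200; -252; 0; 2016; -300; 0; -120]);
  (([::], [:: (false,false,true)]), [:: 2547; 1827; 36; 525; -1225; 700; -252; 588; -336; -300; 280; 20]);
  (([::], [:: (false,false,false); (false,false,true); (false,true,false); (false,true,true)]), [:: 63; 4263; 84; 630; -1470; 840; -168; 392; -224; 0; 0; 0]);
  (([:: (false,false,false); (false,false,true); (false,true,false); (false,true,true)], [::]), [:: 63; 0; -504; 630; 0; -5040; -168; 0; 1344; 0; 0; 0]);
  (([::], [:: (false,false,false); (false,false,true); (true,false,false); (true,false,true)]), [:: 63; 4263; 84; 630; -1470; 840; -168; 392; -224; 0; 0; 0]);
  (([:: (false,false,false); (false,false,true); (true,false,false); (true,false,true)], [::]), [:: 63; 0; -504; 630; 0; -5040; -168; 0; 1344; 0; 0; 0]);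
  (([:: (false,false,false); (false,true,false); (true,false,false); (true,true,false)], [::]), [:: 63; 0; -504; 315; 0; -2520; -168; 0; 1344; 0; 0; 0]);
  (([::], [:: (false,false,true); (false,true,true); (true,false,true); (true,true,true)]), [:: 63; 4263; 84; 315; -735; 420; -168; 392; -224; 0; 0; 0]);
  (([::], [::]), [:: 4410; 0; 0; 0; 0; 0; 0; 0; 0; 0; 0; 0]);
  (([::], [:: (false,false,false); (false,false,true); (false,true,false); (true,false,false); (true,false,true); (true,true,false)]), [:: 63; 4263; 84; 0; 0; 0; 42; -98; 56; 0; 0; 0]);
  (([::], [:: (false,false,false); (false,false,true); (false,true,true); (true,false,false); (true,false,true); (true,true,true)]), [:: 63; 4263; 84; 0; 0; 0; 42; -98; 56; 0; 0; 0]);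
  (([::], [:: (false,false,false); (false,true,false); (false,true,true); (true,false,false); (true,true,false); (true,true,true)]), [:: 63; 4263; 84; 0; 0; 0; 42; -98; 56; 0; 0; 0]);
  (([::], [:: (false,false,true); (false,true,false); (false,true,true); (true,false,true); (true,true,false); (true,true,true)]), [:: 63; 4263; 84; 0; 0; 0; 42; -98; 56; 0; 0; 0]);
  (([:: (false,false,false); (false,false,true); (false,true,false); (true,false,false); (true,false,true); (true,true,false)], [::]), [:: 63; 0; -504; 0; 0; 0; 42; 0; -336; 0; 0; 0]);
  (([:: (false,false,false); (false,false,true); (false,true,true); (true,false,false); (true,false,true); (true,true,true)], [::]), [:: 63; 0; -504; 0; 0; 0; 42; 0; -336; 0; 0; 0]);
  (([:: (false,false,false); (false,true,false); (false,true,true); (true,false,false); (true,true,false); (true,true,true)], [::]), [:: 63; 0; -504; 0; 0; 0; 42; 0; -336; 0; 0; 0]);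
  (([:: (false,false,true); (false,true,false); (false,true,true); (true,false,true); (true,true,false); (true,true,true)], [::]), [:: 63; 0; -504; 0; 0; 0; 42; 0; -336; 0; 0; 0]);
  (([::], [:: (false,false,false); (false,false,true); (false,true,false); (false,true,true); (true,false,false); (true,true,false)]), [:: 63; 4263; 84; 0; 0; 0; 42; -98; 56; 0; 0; 0]);
  (([::], [:: (false,false,false); (false,false,true); (false,true,false); (false,true,true); (true,false,true); (true,true,true)]), [:: 63; 4263; 84; 0; 0; 0; 42; -98; 56; 0; 0; 0]);
  (([::], [:: (false,false,false); (false,true,false); (true,false,false); (true,false,true); (true,true,false); (true,true,true)]), [:: 63; 4263; 84; 0; 0; 0; 42; -98; 56; 0; 0; 0]);
  (([::], [:: (false,false,true); (false,true,true); (true,false,false); (true,false,true); (true,true,false); (true,true,true)]), [:: 63; 4263; 84; 0; 0; 0; 42; -98; 56; 0; 0; 0]);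
  (([:: (false,false,false); (false,false,true); (false,true,false); (false,true,true); (true,false,false); (true,true,false)], [::]), [:: 63; 0; -504; 0; 0; 0; 42; 0; -336; 0; 0; 0]);
  (([:: (false,false,false); (false,false,true); (false,true,false); (false,true,true); (true,false,true); (true,true,true)], [::]), [:: 63; 0; -504; 0; 0; 0; 42; 0; -336; 0; 0; 0]);
  (([:: (false,false,false); (false,true,false); (true,false,false); (true,false,true); (true,true,false); (true,true,true)], [::]), [:: 63; 0; -504; 0; 0; 0; 42; 0; -336; 0; 0; 0]);
  (([:: (false,false,true); (false,true,true); (true,false,false); (true,false,true); (true,true,false); (true,true,true)], [::]), [:: 63; 0; -504; 0; 0; 0; 42; 0; -336; 0; 0; 0]);
  (([:: (false,false,false); (false,false,true); (false,true,false); (false,true,true); (true,false,false); (true,false,true)], [::]), [:: 63; 0; -504; 0; 0; 0; 42; 0; -336; 0; 0; 0]);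
  (([:: (false,false,false); (false,false,true); (false,true,false); (false,true,true); (true,true,false); (true,true,true)], [::]), [:: 63; 0; -504; 0; 0; 0; 42; 0; -336; 0; 0; 0]);
  (([:: (false,false,false); (false,false,true); (true,false,false); (true,false,true); (true,true,false); (true,true,true)], [::]), [:: 63; 0; -504; 0; 0; 0; 42; 0; -336; 0; 0; 0]);
  (([:: (false,true,false); (false,true,true); (true,false,false); (true,false,true); (true,true,false); (true,true,true)], [::]), [:: 63; 0; -504; 0; 0; 0; 42; 0; -336; 0; 0; 0]);
  (([::], [:: (false,false,false); (false,false,true); (false,true,false); (false,true,true); (true,false,false); (true,false,true)]), [:: 63; 4263; 84; 0; 0; 0; 42; -98; 56; 0; 0; 0]);
  (([::], [:: (false,false,false); (false,false,true); (false,true,false); (false,true,true); (true,true,false); (true,true,true)]), [:: 63; 4263; 84; 0; 0; 0; 42; -98; 56; 0; 0; 0]);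
  (([::], [:: (false,false,false); (false,false,true); (true,false,false); (true,false,true); (true,true,false); (true,true,true)]), [:: 63; 4263; 84; 0; 0; 0; 42; -98; 56; 0; 0; 0]);
  (([::], [:: (false,true,false); (false,true,true); (true,false,false); (true,false,true); (true,true,false); (true,true,true)]), [:: 63; 4263; 84; 0; 0; 0; 42; -98; 56; 0; 0; 0]);
  (([::], [:: (false,false,false); (false,false,true); (false,true,false); (false,true,true); (true,false,true); (true,true,false); (true,true,true)]), [:: 63; 4263; 84; 0; 0; 0; -63; 147; -84; 0; 0; 0]);
  (([::], [:: (false,false,true); (false,true,false); (false,true,true); (true,false,false); (true,false,true); (true,true,false); (true,true,true)]), [:: 63; 4263; 84; 0; 0; 0; -63; 147; -84; 0; 0; 0]);
  (([::], [:: (false,false,false); (false,false,true); (false,true,false); (false,true,true); (true,false,false); (true,true,false); (true,true,true)]), [:: 63; 4263; 84; 0; 0; 0; -63; 147; -84; 0; 0; 0]);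
  (([::], [:: (false,false,false); (false,true,false); (false,true,true); (true,false,false); (true,false,true); (true,true,false); (true,true,true)]), [:: 63; 4263; 84; 0; 0; 0; -63; 147; -84; 0; 0; 0]);
  (([::], [:: (false,false,false); (false,false,true); (false,true,false); (false,true,true); (true,false,false); (true,false,true); (true,true,true)]), [:: 63; 4263; 84; 0; 0; 0; -63; 147; -84; 0; 0; 0]);
  (([::], [:: (false,false,false); (false,false,true); (false,true,true); (true,false,false); (true,false,true); (true,true,false); (true,true,true)]), [:: 63; 4263; 84; 0; 0; 0; -63; 147; -84; 0; 0; 0]);
  (([::], [:: (false,false,false); (false,false,true); (false,true,false); (false,true,true); (true,false,false); (true,false,true); (true,true,false)]), [:: 63; 4263; 84; 0; 0; 0; -63; 147; -84; 0; 0; 0]);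
  (([::], [:: (false,false,false); (false,false,true); (false,true,false); (true,false,false); (true,false,true); (true,true,false); (true,true,true)]), [:: 63; 4263; 84; 0; 0; 0; -63; 147; -84; 0; 0; 0]);
  (([:: (false,false,false); (false,false,true); (false,true,false); (false,true,true); (true,false,true); (true,true,false); (true,true,true)], [::]), [:: 63; 0; -504; 0; 0; 0; -63; 0; 504; 0; 0; 0]);
  (([:: (false,false,true); (false,true,false); (false,true,true); (true,false,false); (true,false,true); (true,true,false); (true,true,true)], [::]), [:: 63; 0; -504; 0; 0; 0; -63; 0; 504; 0; 0; 0]);
  (([:: (false,false,false); (false,false,true); (false,true,false); (false,true,true); (true,false,false); (true,true,false); (true,true,true)], [::]), [:: 63; 0; -504; 0; 0; 0; -63; 0; 504; 0; 0; 0]);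
  (([:: (false,false,false); (false,true,false); (false,true,true); (true,false,false); (true,false,true); (true,true,false); (true,true,true)], [::]), [:: 63; 0; -504; 0; 0; 0; -63; 0; 504; 0; 0; 0]);
  (([:: (false,false,false); (false,false,true); (false,true,false); (false,true,true); (true,false,false); (true,false,true); (true,true,true)], [::]), [:: 63; 0; -504; 0; 0; 0; -63; 0; 504; 0; 0; 0]);
  (([:: (false,false,false); (false,false,true); (false,true,true); (true,false,false); (true,false,true); (true,true,false); (true,true,true)], [::]), [:: 63; 0; -504; 0; 0; 0; -63; 0; 504; 0; 0; 0]);
  (([:: (false,false,false); (false,false,true); (false,true,false); (false,true,true); (true,false,false); (true,false,true); (true,true,false)], [::]), [:: 63; 0; -504; 0; 0; 0; -63; 0; 504; 0; 0; 0]);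
  (([:: (false,false,false); (false,false,true); (false,true,false); (true,false,false); (true,false,true); (true,true,false); (true,true,true)], [::]), [:: 63; 0; -504; 0; 0; 0; -63; 0; 504; 0; 0; 0])].

Definition tail_eig (j : nat) : int := nth 0 [:: 8; 4; 1] j.
Definition head_eig (i : nat) : int := nth 0 [:: 8; 4; 3; 1] i.

Definition tail_coef (Q : guess) (j : nat) : int :=
  nth 0 (nth [::] (map snd tail_table) (index Q (map fst tail_table))) j.
Definition head_coef (P : guess) (i j : nat) : int :=
  nth 0 (nth [::] (map snd head_table) (index P (map fst head_table))) (3 * i + j).

Definition tail_table_ok : bool :=
  all (fun Q => all (fun l => post2 Q l \in map fst tail_table) all_bit3
     && all (fun j => sum_bit3 (fun l => tail_coef (post2 Q l) j) == tail_eig j * tail_coef Q j)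
            (iota 0 3)
     && ((rej_tail 1 Q)%:R * 4410 == tail_coef Q 0 * 8 + tail_coef Q 1 * 4 + tail_coef Q 2))
    (map fst tail_table).

Lemma tail_table_okT : tail_table_ok.
Proof. by vm_compute. Qed.

Definition head_table_ok : bool :=
  all (fun P => all (fun l => post2 P l \in map fst head_table) all_bit3
     && all (fun l => reset2 (post2 P l) \in map fst tail_table) all_bit3
     && all (fun i => all (fun j =>
          sum_bit3 (fun l => head_coef (post2 P l) i j) == head_eig i * head_coef P i j)
          (iota 0 3)) (iota 0 4)
     && all (fun j =>
          head_coef P 0 j * 8 + head_coef P 1 j * 4 + head_coef P 2 j * 3 + head_coef P 3 j
          == sum_bit3 (fun l => tail_coef (reset2 (post2 P l)) j)) (iota 0 3))
    (map fst head_table).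

Lemma head_table_okT : head_table_ok.
Proof. by vm_compute. Qed.

Definition tail_form (Q : guess) (r : nat) : int :=
  \sum_(j < 3) tail_coef Q j * tail_eig j ^+ r.

Definition head_form (P : guess) (m r : nat) : int :=
  \sum_(i < 4) \sum_(j < 3) head_coef P i j * head_eig i ^+ m * tail_eig j ^+ r.

Lemma tail_tableP Q : Q \in map fst tail_table ->
  [/\ forall l, post2 Q l \in map fst tail_table,
      forall j, (j < 3)%N -> sum_bit3 (fun l => tail_coef (post2 Q l) j) = tail_eig j * tail_coef Q j
    & (rej_tail 1 Q)%:R * 4410 = tail_form Q 1].
Proof.
move=> hQ; have /allP/(_ Q hQ)/andP[/andP[h1 h2] /eqP h3] := tail_table_okT.
split=> [l | j hj | ]; first exact/(allP h1)/mem_all_bit3.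
  by apply/eqP; apply: (allP h2); rewrite mem_iota.
by rewrite h3 /tail_form !big_ord_recr big_ord0 /= add0r !mulr1.
Qed.

Lemma rej_tail_form r Q : (0 < r)%N -> Q \in map fst tail_table ->
  (rej_tail r Q)%:R * 4410 = tail_form Q r.
Proof.
case: r => // r _; elim: r Q => [|r IH] Q hQ; have [hpost hcoef h1] := tail_tableP hQ.
  exact: h1.
rewrite -[rej_tail _ Q]/(sum_bit3 (fun l => rej_tail r.+1 (post2 Q l))).
rewrite sum_bit3E natr_sum mulr_suml.
under eq_bigr => l _ do rewrite IH //.
rewrite /tail_form exchange_big; apply: eq_bigr => j _.
by rewrite -mulr_suml -sum_bit3E hcoef // [in RHS]exprS mulrCA mulrA.
Qed.

Lemma head_tableP P : P \in map fst head_table ->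
  [/\ forall l, post2 P l \in map fst head_table,
      forall l, reset2 (post2 P l) \in map fst tail_table,
      forall i j, (i < 4)%N -> (j < 3)%N ->
        sum_bit3 (fun l => head_coef (post2 P l) i j) = head_eig i * head_coef P i j
    & forall j, (j < 3)%N ->
        \sum_(i < 4) head_coef P i j * head_eig i = sum_bit3 (fun l => tail_coef (reset2 (post2 P l)) j)].
Proof.
move=> hP; have /allP/(_ P hP)/andP[/andP[/andP[h1 h2] h3] h4] := head_table_okT.
split=> [l | l | i j hi hj | j hj].
- exact/(allP h1)/mem_all_bit3.
- exact/(allP h2)/mem_all_bit3.
- move/allP/(_ i): h3; rewrite mem_iota => /(_ hi)/allP/(_ j).
  by rewrite mem_iota => /(_ hj)/eqP.
- rewrite !big_ord_recr big_ord0 /= add0r mulr1; apply/eqP.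
  by apply: (allP h4); rewrite mem_iota.
Qed.

Lemma rej_count_form m r P : (0 < m)%N -> (0 < r)%N -> P \in map fst head_table ->
  (rej_count m r P)%:R * 4410 = head_form P m r.
Proof.
case: m => // m _ hr; elim: m P => [|m IH] P hP; have [hpost hreset hcoef hbase] := head_tableP hP.
  rewrite -[rej_count 1 r P]/(sum_bit3 (fun l => rej_tail r (reset2 (post2 P l)))).
  rewrite sum_bit3E natr_sum mulr_suml.
  under eq_bigr => l _ do rewrite rej_tail_form //.
  rewrite /tail_form /head_form [LHS]exchange_big [RHS]exchange_big; apply: eq_bigr => j _.
  rewrite -mulr_suml -sum_bit3E -hbase // mulr_suml.
  by apply: eq_bigr => i _; rewrite expr1.
rewrite -[rej_count _ r P]/(sum_bit3 (fun l => rej_count m.+1 r (post2 P l))).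
rewrite sum_bit3E natr_sum mulr_suml.
under eq_bigr => l _ do rewrite IH //.
rewrite /head_form exchange_big; apply: eq_bigr => i _.
rewrite exchange_big; apply: eq_bigr => j _.
rewrite -mulr_suml -mulr_suml -sum_bit3E hcoef //.
by rewrite [head_eig i ^+ _.+2]exprS; ring.
Qed.

Definition init_form (X Y Z A B : int) : int :=
  684 * X * A + 1827 * X * B - 180 * X
  + 1050 * Y * A - 1225 * Y * B - 3500 * Y
  - 504 * Z * A + 588 * Z * B + 1680 * Z
  - 600 * A + 280 * B - 100.

Lemma head_form_init m r :
  head_form init_guess m r = init_form (8 ^+ m) (4 ^+ m) (3 ^+ m) (8 ^+ r) (4 ^+ r).
Proof.
rewrite /head_form !big_ord_recr !big_ord0 /= /head_eig /tail_eig /= /init_form !expr1n.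
have [-> [-> [-> [-> [-> [-> [-> [-> [-> [-> [-> ->]]]]]]]]]]] :
  head_coef init_guess 0 0 = 684 /\ head_coef init_guess 0 1 = 1827 /\
  head_coef init_guess 0 2 = -180 /\ head_coef init_guess 1 0 = 1050 /\
  head_coef init_guess 1 1 = -1225 /\ head_coef init_guess 1 2 = -3500 /\
  head_coef init_guess 2 0 = -504 /\ head_coef init_guess 2 1 = 588 /\
  head_coef init_guess 2 2 = 1680 /\ head_coef init_guess 3 0 = -600 /\
  head_coef init_guess 3 1 = 280 /\ head_coef init_guess 3 2 = -100 by vm_compute.
by ring.
Qed.

Lemma init_form_lt (X Y Z A B : int) :
  0 <= Z <= Y -> Y * 2 <= X -> 0 <= B -> B * 4 <= A -> 64 <= X * A ->
  Y * 8 <= X \/ B * 8 <= A ->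
  init_form X Y Z A B < 1575 * (X * A) - 3780.
Proof.
move=> /andP[hZ hZY] hYX hB hBA hXA hcase.
have hY : 0 <= Y by apply: le_trans hZY.
have hX : 0 <= X by lia.
have hA : 0 <= A by lia.
have hXB : X * B * 4 <= X * A by rewrite -mulrA ler_wpM2l.
have hYA : Y * A * 2 <= X * A by rewrite mulrAC ler_wpM2r.
have hZB : Z * B * 4 <= Z * A by rewrite -mulrA ler_wpM2l.
have hYB : 0 <= Y * B by rewrite mulr_ge0.
have hZA : 0 <= Z * A by rewrite mulr_ge0.
rewrite /init_form; case: hcase => [hYX8 | hBA8].
  have : Y * A * 8 <= X * A by rewrite mulrAC ler_wpM2r.
  lia.
have : X * B * 8 <= X * A by rewrite -mulrA ler_wpM2l.
lia.
Qed.

Lemma init_form_r1 (X Y Z : int) : init_form X Y Z 8 4 = 1575 * (X * 8) - 3780.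
Proof. by rewrite /init_form; ring. Qed.

Lemma head_form_init_lt m r : (0 < m)%N -> (1 < r)%N -> (4 < m + r)%N ->
  head_form init_guess m r < head_form init_guess (m + r).-1 1.
Proof.
move=> hm hr hmr.
have pow_gap j k : (j <= k)%N -> 4 ^+ k * 2 ^+ j <= (8 : int) ^+ k.
  by move=> hjk; rewrite -[8]/(4 * 2 : int) exprMn ler_wpM2l ?exprn_ge0 // ler_eXn2l.
have e8 : (8 : int) ^+ (m + r).-1 * 8 = 8 ^+ m * 8 ^+ r.
  by rewrite -exprSr prednK ?exprD //; lia.
rewrite !head_form_init !expr1 init_form_r1 e8; apply: init_form_lt.
- by rewrite exprn_ge0 // lerXn2r // nnegrE.
- by have := pow_gap 1%N m hm; rewrite expr1.
- exact: exprn_ge0.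
- by have := pow_gap 2%N r hr.
- rewrite -exprD (le_trans (_ : 64 <= 8 ^+ 2)) // ler_eXn2l //; lia.
have [r2|r3] : r = 2%N \/ (2 < r)%N by lia.
  by left; have := pow_gap 3%N m ltac:(lia).
by right; have := pow_gap 3%N r r3.
Qed.

Lemma init_guess_in_table : init_guess \in map fst head_table.
Proof. by vm_compute. Qed.

End ClosedForm.

Theorem corollary6 (n : nat) (hn : 5 <= n) (r : nat) (hr1 : 2 <= r) (hr2 : r <= n - 1) :
  Nzero n r < Nzero n 1.
Proof.
case: n hn hr2 => // n hn hr2.
have hrn : r <= n by lia.
rewrite !Nzero_rej_count //; last by lia.
rewrite -(ltr_nat int) -(@ltr_pM2r _ 4410) //.
rewrite !rej_count_form ?init_guess_in_table //; try lia.
have -> : (n.+1 - 1 = (n.+1 - r + r).-1)%N by lia.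
by apply: head_form_init_lt; lia.
Qed.
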